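(* With the setting in the context, for all $s\in\mathrm{hom}(C,G)_{-1}$ and $v\in\mathrm{hom}(C,G)^1$, $$\mathcal A_s=\prod_n\prod_{x\in K_n}A_x^{s_n(x)},\qquad \mathcal B_v=\prod_n\prod_{x\in K_n}B_x^{v_n(x)},$$ where $s_n(x)\in\widehat G_{n+1}$ is defined by $s_n(x)(g)=s(gx^* )$ for $g\in G_{n+1}$, and $v_n(x)\in G_{n-1}$ is the value of the $n$-th component of $v$ at $x$.
   Context: $(C_\bullet,\partial^C_\bullet)$ is a chain complex with each $C_n$ free abelian on a finite set $K_n$, $K_n\ne\emptyset$ for finitely many $n$; $(G_\bullet,\partial^G_\bullet)$ is a chain complex of finite abelian groups, $\widehat{G}_k=\mathrm{Hom}(G_k,U(1))$. $\mathrm{hom}(C,G)^p=\prod_n\mathrm{Hom}(C_n,G_{n-p})$ with $(\delta^pf)_n=f_{n-1}\partial^C_n-(-1)^p\partial^G_{n-p}f_n$. $\mathrm{hom}(C,G)_p=\mathrm{Hom}(\mathrm{hom}(C,G)^p,U(1))$ (written additively), $\chi_m(f)=m(f)$, $\delta_1m=m\circ\delta^0$. $\mathcal H=\bigotimes_n\bigotimes_{x\in K_n}\mathbb C[G_n]$ with orthonormal basis $|f\rangle$, $f\in\mathrm{hom}(C,G)^0$; $P_t|f\rangle=|f+t\rangle$, $Q_m|f\rangle=\chi_m(f)|f\rangle$; $A_t=P_{\delta^{-1}t}$, $B_m=Q_{\delta_1m}$. $\mathcal A_s=\frac1{|\mathrm{hom}(C,G)^{-1}|}\sum_{t\in\mathrm{hom}(C,G)^{-1}}\chi_s(t)A_t$,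 $\mathcal B_v=\frac1{|\mathrm{hom}(C,G)_1|}\sum_{m\in\mathrm{hom}(C,G)_1}\chi_m(v)B_m$. For $x\in K_n$, $g\in G_{n-p}$, $gx^*\in\mathrm{hom}(C,G)^p$ has $n$-th component sending $x\mapsto g$ and other elements of $K_n$ to $0$, other components $0$; for $r\in\widehat G_{n-p}$, $rx_*(f)=r(f_n(x))$. For $x\in K_n$: $A_x^r=\frac1{|G_{n+1}|}\sum_{h\in G_{n+1}}r(h)A_{hx^*}$ ($r\in\widehat G_{n+1}$), $B_x^g=\frac1{|G_{n-1}|}\sum_{r\in\widehat G_{n-1}}r(g)B_{rx_*}$ ($g\in G_{n-1}$). *)

From HB Require Import structures.
From mathcomp Require Import all_boot all_order all_algebra all_field.
From Stdlib Require Import ClassicalEpsilon.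
Set Implicit Arguments. Unset Strict Implicit. Unset Printing Implicit Defensive.
Import Order.TTheory GRing.Theory Num.Theory.
Local Open Scope ring_scope.

(* U(1)-valued characters of a finite abelian group (T, add), as finite functions into
   the complex numbers (algC: all character values are roots of unity, hence algebraic). *)
Definition is_char (T : finType) (add : T -> T -> T) (m : {ffun T -> algC}) : Prop :=
  (forall a b, m (add a b) = m a * m b) /\ (forall a, `|m a| = 1).

Definition chars_spec (T : finType) (add : T -> T -> T) (s : seq {ffun T -> algC}) : Prop :=
  uniq s /\ (forall m, m \in s <-> is_char add m).

Definition chars (T : finType) (add : T -> T -> T) : seq {ffun T -> algC} :=
  epsilon (inhabits [::]) (chars_spec add).

Section Setting.
(* The cells: K = disjoint union of the K_n, with deg x = n for x in K_n. *)
Variable cell : finType.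
Variable deg : cell -> int.
(* boundary of C: d^C x = sum_y dC x y * y *)
Variable dC : cell -> cell -> int.
Variable G : int -> finZmodType.
Variable dG : forall n : int, {additive G n -> G (n - 1)}.

(* transport along an equality of degrees (zero if the degrees differ) *)
Definition castz (m n : int) (g : G m) : G n :=
  match @eqP _ m n with
  | ReflectT e => eq_rect m (fun k => G k) g n e
  | ReflectF _ => 0
  end.
Arguments castz : clear implicits.

(* hom(C,G)^p = prod_n Hom(C_n, G_{n-p}) = functions x in K_n |-> G_{n-p} *)
Definition cochain (p : int) := {dffun forall x : cell, G (deg x - p)}.

Definition cadd (p : int) (f t : cochain p) : cochain p := [ffun x => f x + t x].

(* delta^p : hom^p -> hom^q (used with q = p + 1):
   (delta f)_n = f_{n-1} d^C_n - (-1)^p d^G_{n-p} f_n *)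
Definition delta (p q : int) (f : cochain p) : cochain q :=
  [ffun x => \sum_(y : cell) (castz (deg y - p) (deg x - q) (f y)) *~ dC x y
      + castz (deg x - p - 1) (deg x - q)
          (if odd `|p|%N then dG (deg x - p) (f x) else - dG (deg x - p) (f x))].

Arguments delta : clear implicits.

Definition pt (p : int) (x : cell) (g : G (deg x - p)) : cochain p :=
  [ffun y => if y == x then castz (deg x - p) (deg y - p) g else 0].
Arguments pt : clear implicits.

Definition N0 := #|{: cochain 0}|.
Definition op := 'M[algC]_N0.
Definition bas (i : 'I_N0) : cochain 0 := enum_val i.

(* P_t |f> = |f + t>,  Q_m |f> = chi_m(f) |f>  (matrix entry (i,j) = <i|O|j>) *)
Definition Pop (t : cochain 0) : op :=
  \matrix_(i, j) ((bas i == cadd (bas j) t)%:R).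
Definition Qop (m : cochain 0 -> algC) : op :=
  \matrix_(i, j) ((i == j)%:R * m (bas j)).

Definition Aop (t : cochain (-1)) : op := Pop (delta (-1) 0 t).
Definition Bop (m : cochain 1 -> algC) : op := Qop (fun f => m (delta 0 1 f)).

Definition calA (s : {ffun cochain (-1) -> algC}) : op :=
  (#|{: cochain (-1)}|%:R)^-1 *: \sum_(t : cochain (-1)) s t *: Aop t.
Definition calB (v : cochain 1) : op :=
  ((size (chars (@cadd 1)))%:R)^-1 *:
    \sum_(m <- chars (@cadd 1)) m v *: Bop (fun f => m f).

Definition Axr (x : cell) (r : {ffun G (deg x + 1) -> algC}) : op :=
  (#|{: G (deg x + 1)}|%:R)^-1 *:
    \sum_(h : G (deg x + 1)) r h *: Aop (pt (-1) x (castz (deg x + 1) (deg x - -1) h)).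
Definition Bxg (x : cell) (g : G (deg x - 1)) : op :=
  (#|{: G (deg x - 1)}|%:R)^-1 *:
    \sum_(r <- chars (@GRing.add (G (deg x - 1))))
      r g *: Bop (fun f : cochain 1 => r (f x)).

Definition sn (s : {ffun cochain (-1) -> algC}) (x : cell) : {ffun G (deg x + 1) -> algC} :=
  [ffun g => s (pt (-1) x (castz (deg x + 1) (deg x - -1) g))].

Definition degs : seq int := undup [seq deg x | x <- enum cell].

End Setting.

(* The map t |-> s(t) A_t is a monoid morphism from (hom^-1, +) to operators, because
   both t |-> A_t and the character s are. A cochain is the sum of its point cochains
   t_n(x) x^*, so its average over hom^-1 factors as the product over the cells x (in
   any fixed order) of the averages over the single coordinate at x, which are the
   A_x^{s_n(x)}. On the B side, orthogonality of characters makes both sides diagonal: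
   B_v is the projector onto the f with v + delta f = 0 and B_x^g the projector onto
   the f with g + (delta f)(x) = 0, and the former condition is the conjunction of
   the latter over all cells. *)

From HB Require Import structures.
From mathcomp Require Import all_boot all_order all_algebra all_field all_fingroup all_character.
From Stdlib Require Import ClassicalEpsilon.
Import Order.TTheory GRing.Theory Num.Theory.
Local Open Scope ring_scope.
Set Implicit Arguments. Unset Strict Implicit.

Lemma prod_scalemx (R : comPzRingType) (n : nat) (I : Type) (r : seq I)
    (c : I -> R) (M : I -> 'M[R]_n) :
  \prod_(i <- r) (c i *: M i) = (\prod_(i <- r) c i) *: \prod_(i <- r) M i.
Proof.
elim: r => [|i r IHr]; first by rewrite !big_nil scale1r.
by rewrite !big_cons IHr -!mulmxE -scalemxAl -scalemxAr scalerA.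
Qed.

Lemma prodr_nat_bool (R : comPzSemiRingType) (I : finType) (b : pred I) :
  \prod_(i : I) (b i)%:R = [forall i, b i]%:R :> R.
Proof.
have [/forallP b_all | /forallPn[i bNi]] := boolP [forall i, b i].
  by rewrite big1 // => i _; rewrite b_all.
by rewrite (bigD1 i) //= (negbTE bNi) mul0r.
Qed.

Section FiniteAbelianCharacters.
Variable V : finZmodType.
Let GV := [set: V]%G.

Definition irr_fun (i : Iirr GV) : {ffun V -> algC} := [ffun a => 'chi[GV]_i a].

Lemma irr_linear_char (i : Iirr GV) : 'chi[GV]_i \is a linear_char.
Proof. exact/char_abelianP/FinRing.zmod_abelian. Qed.

Lemma irr_fun_char i : is_char +%R (irr_fun i).
Proof.
split=> [a b|a]; rewrite !ffunE.
  by rewrite -FinRing.zmodMgE lin_charM ?inE ?irr_linear_char.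
by rewrite normC_lin_char ?inE ?irr_linear_char.
Qed.

Lemma irr_fun_inj : injective irr_fun.
Proof.
move=> i j /ffunP eq_ij; apply: irr_inj; apply/cfunP => a.
by have := eq_ij a; rewrite !ffunE.
Qed.

Lemma char0 (m : {ffun V -> algC}) : is_char +%R m -> m 0 = 1.
Proof.
case=> mD m_norm; have m0_neq0 : m 0 != 0 by rewrite -normr_eq0 m_norm oner_eq0.
by apply: (mulfI m0_neq0); rewrite -mD addr0 mulr1.
Qed.

(* [m] is afforded by the representation [a |-> (m a)%:M] of degree 1, hence is a
   linear, thus irreducible, character. *)
Lemma char_irr_fun m : is_char +%R m -> exists i, m = irr_fun i.
Proof.
move=> m_char; have [mD _] := m_char.
have m_repr : mx_repr GV (fun a => (m a)%:M : 'M_1).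
  split=> [|a b _ _]; first by rewrite [1%g]/= char0.
  by rewrite FinRing.zmodMgE mD scalar_mxM.
pose rG := MxRepresentation m_repr.
have lin : cfRepr rG \is a linear_char by apply/andP; rewrite cfRepr_char cfRepr1.
have /irrP[i chi_i] := lin_char_irr lin.
by exists i; apply/ffunP=> a; rewrite ffunE -chi_i cfunE inE mulr1n mxtrace_scalar.
Qed.

Lemma chars_spec_irr : chars_spec +%R (map irr_fun (enum (Iirr GV))).
Proof.
split; first by rewrite map_inj_uniq ?enum_uniq //; exact: irr_fun_inj.
move=> m; split; first by case/mapP => i _ ->; exact: irr_fun_char.
by case/char_irr_fun => i ->; apply: map_f; rewrite mem_enum.
Qed.

Lemma perm_chars_irr : perm_eq (chars (@GRing.add V)) (map irr_fun (enum (Iirr GV))).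
Proof.
have [[chars_uniq chars_mem] [irr_uniq irr_mem]] :
    chars_spec +%R (chars (@GRing.add V)) /\ chars_spec +%R (map irr_fun (enum (Iirr GV))).
  split; last exact: chars_spec_irr.
  by apply: epsilon_spec; exists (map irr_fun (enum (Iirr GV))); exact: chars_spec_irr.
apply: uniq_perm => // m.
by apply/idP/idP => [/chars_mem/irr_mem | /irr_mem/chars_mem].
Qed.

Lemma size_chars : size (chars (@GRing.add V)) = #|V|.
Proof.
rewrite (perm_size perm_chars_irr) size_map -cardE card_Iirr_abelian ?cardsT //.
exact: FinRing.zmod_abelian.
Qed.

Lemma mem_chars_char m : m \in chars (@GRing.add V) -> is_char +%R m.
Proof. by rewrite (perm_mem perm_chars_irr) => /mapP[i _ ->]; exact: irr_fun_char. Qed.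

Lemma sum_chars a : \sum_(r <- chars (@GRing.add V)) r a = #|V|%:R * (a == 0)%:R.
Proof.
rewrite (perm_big _ perm_chars_irr) big_map big_enum /=.
transitivity (\sum_i 'chi[GV]_i a * ('chi[GV]_i 1%g)^*).
  by apply: eq_bigr => i _; rewrite ffunE lin_char1 ?irr_linear_char // conjC1 mulr1.
rewrite second_orthogonality_relation ?group1 // class1G inE mulr_natr.
suff -> : 'C_GV[a]%g = GV by rewrite cardsT.
by apply/setP=> b; rewrite in_setI in_setT /=; apply/cent1P; exact: FinRing.zmod_mulgC.
Qed.

Lemma mean_chars_mul a b :
  (#|V|%:R)^-1 * \sum_(r <- chars (@GRing.add V)) r a * r b = (a + b == 0)%:R.
Proof.
have V_neq0 : #|V|%:R != 0 :> algC by rewrite pnatr_eq0 -lt0n; apply/card_gt0P; exists 0.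
transitivity ((#|V|%:R)^-1 * \sum_(r <- chars (@GRing.add V)) r (a + b)).
  by congr (_ * _); rewrite !big_seq; apply: eq_bigr => r /mem_chars_char[rD _].
by rewrite sum_chars mulKf.
Qed.

End FiniteAbelianCharacters.

Section CochainGroup.
Variables (cell : finType) (deg : cell -> int) (G : int -> finZmodType) (p : int).
Local Notation cochain := (cochain deg G p).

Definition czero : cochain := [ffun=> 0].
Definition copp (f : cochain) : cochain := [ffun x => - f x].

Lemma caddA : associative (@cadd _ deg G p).
Proof. by move=> f g h; apply/ffunP=> x; rewrite !ffunE addrA. Qed.

Lemma caddC : commutative (@cadd _ deg G p).
Proof. by move=> f g; apply/ffunP=> x; rewrite !ffunE; exact: addrC. Qed.

Lemma add0c : left_id czero (@cadd _ deg G p).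
Proof. by move=> f; apply/ffunP=> x; rewrite !ffunE add0r. Qed.

Lemma addNc : left_inverse czero copp (@cadd _ deg G p).
Proof. by move=> f; apply/ffunP=> x; rewrite !ffunE addNr. Qed.

HB.instance Definition _ := Finite.copy cochain {dffun forall x : cell, G (deg x - p)}.
HB.instance Definition _ := GRing.isZmodule.Build cochain caddA caddC add0c addNc.

Lemma caddE (f g : cochain) : cadd f g = f + g.
Proof. by []. Qed.

Lemma cochain_addE (f g : cochain) (x : cell) : (f + g) x = f x + g x.
Proof. exact: ffunE. Qed.

Lemma cochain0E (x : cell) : (0 : cochain) x = 0.
Proof. exact: ffunE. Qed.

Lemma cochain_eq0 (f : cochain) : (f == 0) = [forall x, f x == 0].
Proof.
apply/eqP/forallP => [-> x | f0]; first by rewrite cochain0E.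
by apply/ffunP=> x; rewrite cochain0E; apply/eqP.
Qed.

Lemma card_cochain : #|cochain| = (\prod_(x : cell) #|G (deg x - p)%R|)%N.
Proof. by rewrite card_dep_ffun foldrE big_map /index_enum /= ?enumT. Qed.

End CochainGroup.

Section Coboundary.
Variables (cell : finType) (deg : cell -> int) (dC : cell -> cell -> int).
Variables (G : int -> finZmodType) (dG : forall n : int, {additive G n -> G (n - 1)}).

Lemma castzz m (g : G m) : castz m g = g.
Proof. by rewrite /castz; case: eqP => // e; rewrite (eq_irrelevance e erefl). Qed.

Lemma castz0 m n : castz n (0 : G m) = 0.
Proof. by rewrite /castz; case: eqP => // e; case: n / e. Qed.

Lemma castzD m n (a b : G m) : castz n (a + b) = castz n a + castz n b.
Proof. by rewrite /castz; case: eqP => [e|_]; [case: n / e | rewrite addr0]. Qed.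

Lemma delta0 p q : delta dC dG q (0 : cochain deg G p) = 0.
Proof.
apply/ffunP=> x; rewrite !ffunE big1 => [|y _]; last by rewrite ffunE castz0 mul0rz.
by case: ifP; rewrite raddf0 ?oppr0 castz0 add0r.
Qed.

Lemma deltaD p q (f g : cochain deg G p) :
  delta dC dG q (f + g) = delta dC dG q f + delta dC dG q g.
Proof.
apply/ffunP=> x; rewrite !ffunE.
under eq_bigr do rewrite ffunE castzD mulrzDl.
rewrite big_split /= -addrACA; congr (_ + _).
by case: ifP => _; rewrite raddfD ?opprD castzD.
Qed.

Lemma pt_id p x (g : G (deg x - p)) : @pt _ deg G p x g x = g.
Proof. by rewrite ffunE eqxx castzz. Qed.

Lemma pt_neq p x y (g : G (deg x - p)) : y != x -> @pt _ deg G p x g y = 0.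
Proof. by rewrite ffunE => /negbTE ->. Qed.

End Coboundary.

Section CellsByDegree.
Variables (cell : finType) (deg : cell -> int).

Definition cells_by_deg (ns : seq int) : seq cell :=
  flatten [seq [seq x <- index_enum cell | deg x == n] | n <- ns].

Lemma mem_cells_by_deg ns x : (x \in cells_by_deg ns) = (deg x \in ns).
Proof.
elim: ns => [//|n ns IHns].
by rewrite /cells_by_deg /= mem_cat mem_filter mem_index_enum andbT IHns inE eq_sym.
Qed.

Lemma cells_by_deg_uniq ns : uniq ns -> uniq (cells_by_deg ns).
Proof.
elim: ns => [//|n ns IHns] /= /andP[nNns ns_uniq].
rewrite cat_uniq IHns // filter_uniq ?index_enum_uniq //= andbT.
apply/hasPn => x; rewrite mem_cells_by_deg mem_filter => x_ns.
by apply: contraNN nNns => /andP[/eqP <- _].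
Qed.

Lemma perm_cells_by_degs : perm_eq (cells_by_deg (degs deg)) (index_enum cell).
Proof.
apply: uniq_perm; rewrite ?index_enum_uniq ?cells_by_deg_uniq ?undup_uniq // => x.
by rewrite mem_cells_by_deg mem_index_enum mem_undup map_f ?mem_enum.
Qed.

Lemma prod_degs (R : pzSemiRingType) (F : cell -> R) :
  \prod_(n <- degs deg) \prod_(x | deg x == n) F x
    = \prod_(x <- cells_by_deg (degs deg)) F x.
Proof. by rewrite big_flatten big_map; apply: eq_bigr => n _; rewrite big_filter. Qed.

End CellsByDegree.

Section SumOverCochains.
Variables (cell : finType) (deg : cell -> int) (G : int -> finZmodType) (p : int).
Variables (R : pzSemiRingType) (W : cochain deg G p -> R).
Hypotheses (W0 : W 0 = 1) (WD : forall f g, W (f + g) = W f * W g).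

Local Notation pt x := (@pt _ deg G p x).

Definition supported_on (L : seq cell) (f : cochain deg G p) :=
  [forall y, (y \notin L) ==> (f y == 0)].

Lemma supported_on_cons x L (g : G (deg x - p)) f : x \notin L ->
  supported_on (x :: L) (pt x g + f) && ((pt x g + f) x == g) = supported_on L f.
Proof.
move=> xNL; rewrite cochain_addE pt_id -subr_eq0 addrAC subrr add0r.
apply/andP/forallP => [[/forallP supp_f /eqP fx0] y|supp_f].
  apply/implyP => yNL; have [->|yx] := eqVneq y x; first by rewrite fx0.
  by have := supp_f y; rewrite inE negb_or yx yNL cochain_addE pt_neq // add0r.
split; last by have := supp_f x; rewrite xNL.
apply/forallP=> y; apply/implyP; rewrite inE negb_or => /andP[yx yNL].
by rewrite cochain_addE pt_neq // add0r; have := supp_f y; rewrite yNL.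
Qed.

Lemma sum_supported_on L : uniq L ->
  \sum_(f | supported_on L f) W f = \prod_(x <- L) \sum_(g : G (deg x - p)) W (pt x g).
Proof.
elim: L => [_|x L IHL /= /andP[xNL L_uniq]].
  rewrite big_nil (big_pred1 0) // => f /=; apply/forallP/eqP => [supp_f|-> y].
    by apply/ffunP=> y; rewrite cochain0E; apply/eqP/(implyP (supp_f y)).
  by rewrite cochain0E eqxx implybT.
rewrite big_cons -(IHL L_uniq) mulr_suml.
rewrite (partition_big (fun f : cochain deg G p => f x) predT) //=.
apply: eq_bigr => g _; rewrite (reindex_inj (addrI (pt x g))) /= mulr_sumr.
by apply: eq_big => [f|f _]; [exact: supported_on_cons | exact: WD].
Qed.

Lemma sum_cochain_prod L : uniq L -> (forall x, x \in L) ->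
  \sum_(f : cochain deg G p) W f = \prod_(x <- L) \sum_(g : G (deg x - p)) W (pt x g).
Proof.
move=> L_uniq L_all; rewrite -sum_supported_on //; apply: eq_bigl => f.
by apply/esym/forallP => y; rewrite L_all.
Qed.

End SumOverCochains.

Section Operators.
Variables (cell : finType) (deg : cell -> int) (G : int -> finZmodType).
Local Notation op := (op deg G).
Local Notation cochain0 := (cochain deg G 0).

Lemma bas_eq (i : 'I_(N0 deg G)) (f : cochain0) : (bas i == f) = (i == enum_rank f).
Proof. by rewrite /bas; apply/eqP/eqP => [<-|->]; rewrite ?enum_valK ?enum_rankK. Qed.

Lemma Pop0 : Pop (0 : cochain0) = 1.
Proof. by apply/matrixP=> i j; rewrite !mxE caddE addr0 (inj_eq enum_val_inj). Qed.

Lemma PopD (f g : cochain0) : Pop (f + g) = Pop f * Pop g :> op.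
Proof.
apply/matrixP=> i j; rewrite -mulmxE !mxE (bigD1 (enum_rank (bas j + g))) //=.
rewrite big1 => [|k /negbTE k_neq]; last by rewrite !mxE !caddE [bas k == _]bas_eq k_neq mulr0.
by rewrite !mxE !caddE /bas enum_rankK eqxx mulr1 addr0 (addrC f) addrA.
Qed.

Lemma eq_Qop (q q' : cochain0 -> algC) : q =1 q' -> Qop q = Qop q'.
Proof. by move=> eq_q; apply/matrixP=> i j; rewrite !mxE eq_q. Qed.

Lemma prod_Qop (I : Type) (r : seq I) (q : I -> cochain0 -> algC) :
  \prod_(i <- r) Qop (q i) = Qop (fun f => \prod_(i <- r) q i f) :> op.
Proof.
elim: r => [|i r IHr].
  by apply/matrixP=> j k; rewrite big_nil !mxE big_nil mulr1.
rewrite big_cons IHr; apply/matrixP=> j k; rewrite -mulmxE !mxE big_cons.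
rewrite (bigD1 j) //= big1 => [|l /negbTE l_neq]; last by rewrite !mxE eq_sym l_neq !mul0r.
by rewrite !mxE eqxx mul1r addr0; case: eqP => [->|_]; rewrite ?mul1r ?mul0r ?mulr0.
Qed.

Lemma scale_sum_Qop (I : Type) (r : seq I) (c : algC) (a : I -> algC)
    (q : I -> cochain0 -> algC) :
  c *: \sum_(i <- r) a i *: Qop (q i) = Qop (fun f => c * \sum_(i <- r) a i * q i f) :> op.
Proof.
apply/matrixP=> j k; rewrite !mxE summxE !mulr_sumr; apply: eq_bigr => i _.
by rewrite !mxE [RHS]mulrCA [in RHS](mulrCA _ (a i)).
Qed.

End Operators.

Section Factorizations.
Variables (cell : finType) (deg : cell -> int) (dC : cell -> cell -> int).
Variables (G : int -> finZmodType) (dG : forall n : int, {additive G n -> G (n - 1)}).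

Lemma calA_prod (s : {ffun cochain deg G (-1) -> algC}) :
    is_char (@cadd _ deg G (-1)) s ->
  calA dC dG s = \prod_(n <- degs deg) \prod_(x | deg x == n) Axr dC dG (sn s x).
Proof.
move=> s_char; pose W t := s t *: Aop dC dG t.
have W0 : W 0 = 1 by rewrite /W /Aop delta0 Pop0 (char0 s_char) scale1r.
have WD f g : W (f + g) = W f * W g.
  by rewrite /W /Aop deltaD PopD s_char.1 -mulmxE -scalemxAl -scalemxAr scalerA.
have AxrE x : Axr dC dG (sn s x)
    = (#|G (deg x + 1)|%:R)^-1 *: \sum_(h : G (deg x - -1)) W (@pt _ deg G (-1) x h).
  by rewrite /Axr; congr (_ *: _); apply: eq_bigr => h _; rewrite ffunE castzz.
have cells_uniq : uniq (cells_by_deg deg (degs deg)).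
  exact/cells_by_deg_uniq/undup_uniq.
have cells_all x : x \in cells_by_deg deg (degs deg).
  by rewrite (perm_mem (perm_cells_by_degs deg)) mem_index_enum.
rewrite prod_degs (eq_bigr _ (fun x _ => AxrE x)) prod_scalemx.
rewrite -(sum_cochain_prod W0 WD cells_uniq cells_all) /calA; congr (_ *: _).
by rewrite (perm_big _ (perm_cells_by_degs deg)) card_cochain natr_prod prodfV.
Qed.

Lemma BxgE x (g : G (deg x - 1)) :
  Bxg dC dG g = Qop (fun f => (g + delta dC dG 1 f x == 0)%:R).
Proof. by rewrite /Bxg /Bop scale_sum_Qop; apply: eq_Qop => f; rewrite mean_chars_mul. Qed.

Lemma calBE (v : cochain deg G 1) :
  calB dC dG v = Qop (fun f => (v + delta dC dG 1 f == 0)%:R).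
Proof.
rewrite /calB /Bop (size_chars (cochain deg G 1)) scale_sum_Qop; apply: eq_Qop => f.
by rewrite mean_chars_mul.
Qed.

Lemma calB_prod (v : cochain deg G 1) :
  calB dC dG v = \prod_(n <- degs deg) \prod_(x | deg x == n) Bxg dC dG (v x).
Proof.
rewrite prod_degs calBE (eq_bigr _ (fun x _ => BxgE (v x))) prod_Qop.
apply: eq_Qop => f; rewrite (perm_big _ (perm_cells_by_degs deg)) prodr_nat_bool.
by rewrite cochain_eq0; congr (nat_of_bool _)%:R; apply: eq_forallb => x; rewrite cochain_addE.
Qed.

End Factorizations.

Unset Implicit Arguments. Set Strict Implicit.

Theorem proposition13
  (cell : finType) (deg : cell -> int) (dC : cell -> cell -> int)
  (G : int -> finZmodType) (dG : forall n : int, {additive G n -> G (n - 1)})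
  (hdC : forall x y : cell, dC x y != 0 -> deg y = deg x - 1)
  (hCC : forall x z : cell, \sum_(y : cell) dC x y * dC y z = 0)
  (hGG : forall (n : int) (g : G n), dG (n - 1) (dG n g) = 0)
  (s : {ffun cochain deg G (-1) -> algC}) (hs : is_char (@cadd cell deg G (-1)) s)
  (v : cochain deg G 1) :
  calA dC dG s =
    \prod_(n <- degs deg) \prod_(x : cell | deg x == n) Axr dC dG (sn s x)
  /\
  calB dC dG v =
    \prod_(n <- degs deg) \prod_(x : cell | deg x == n) Bxg dC dG (v x).
Proof. by split; [exact: calA_prod | exact: calB_prod]. Qed.
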